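(* Let $E$ be a finite set and let $\mathcal{W}\subseteq\{+,-,0\}^E$ satisfy (A1), (A2) and (A3). Then $\mathcal{W}$ is an affine oriented matroid.
   Context: For $X\in\{+,-,0\}^E$: $X^+=\{e:X_e=+\}$, $X^-=\{e:X_e=-\}$, support $\underline{X}=X^+\cup X^-$; $(-X)_e=-X_e$; composition $(X\circ Y)_e=X_e$ if $X_e\neq0$, else $Y_e$; $S(X,Y)=(X^+\cap Y^-)\cup(X^-\cap Y^+)$; $\mathcal{A}\circ\mathcal{B}=\{A\circ B: A\in\mathcal{A},B\in\mathcal{B}\}$. An oriented matroid on $F$ is $\mathcal{O}\subseteq\{+,-,0\}^F$ with: (O1) zero vector in $\mathcal{O}$; (O2) $X\in\mathcal{O}\Rightarrow -X\in\mathcal{O}$; (O3) $X,Y\in\mathcal{O}\Rightarrow X\circ Y\in\mathcal{O}$; (O4) if $X,Y\in\mathcal{O}$, $\underline{X}=\underline{Y}$, $e\in S(X,Y)$, there is $Z\in\mathcal{O}$ with $Z_e=0$ and $Z_f=(X\circ Y)_f=(Y\circ X)_f$ for all $f\notin S(X,Y)$. $\mathcal{W}\subseteq\{+,-,0\}^E$ is an affine oriented matroid if there exist $g\notin E$ and an oriented matroid $\mathcal{O}$ on $E\cup\{g\}$ with $\mathcal{W}=\{X|_E : X\in\mathcal{O}, X_g=+\}$. For $X,Y$ with $\underline{X}=\underline{Y}$, $X\neq Y$, $e\in S(X,Y)$: $I_e(X,Y)=\{V : \underline{V}\subseteq\underline{X}\setminus\{e\}, V_f=X_f\ \forall f\notin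 S(X,Y)\}$, $I(X,Y)=\bigcup_{e\in S(X,Y)}I_e(X,Y)$. Sum: $(X+Y)_e=0$ if $e\in S(X,Y)$, else $(X\circ Y)_e$. $\mathrm{asym}(\mathcal{W})=\{V\in\mathcal{W}:-V\notin\mathcal{W}\}$, $\mathcal{P}(\mathcal{W})=\{X+(-Y): X,Y\in\mathrm{asym}(\mathcal{W}), \underline{X}=\underline{Y}, I(X,-Y)\cap\mathcal{W}=I(-X,Y)\cap\mathcal{W}=\emptyset\}$. Axioms: (A1) $X,Y\in\mathcal{W}\Rightarrow X\circ Y\in\mathcal{W}$ and $X\circ(-Y)\in\mathcal{W}$; (A2) if $X,Y\in\mathcal{W}$ with $\underline{X}=\underline{Y}$ then $I_e(X,Y)\cap\mathcal{W}\neq\emptyset$ for every $e\in S(X,Y)$; (A3) $\mathcal{P}(\mathcal{W})\circ\mathcal{W}\subseteq\mathcal{W}$. *)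

From HB Require Import structures.
From mathcomp Require Import all_boot.

Set Implicit Arguments.
Unset Strict Implicit.
Unset Printing Implicit Defensive.

Inductive sign := Plus | Minus | Zero.

Definition sign_to (s : sign) : option bool :=
  match s with Plus => Some true | Minus => Some false | Zero => None end.
Definition sign_of (o : option bool) : sign :=
  match o with Some true => Plus | Some false => Minus | None => Zero end.
Lemma sign_toK : cancel sign_to sign_of. Proof. by case. Qed.
HB.instance Definition _ := Finite.copy sign (can_type sign_toK).

Definition oppS (s : sign) : sign :=
  match s with Plus => Minus | Minus => Plus | Zero => Zero end.

Section SignVectors.
Variable E : finType.
Definition svec := {ffun E -> sign}.

Definition sneg (X : svec) : svec := [ffun e => oppS (X e)].
Definition scomp (X Y : svec) : svec :=
  [ffun e => if X e != Zero then X e else Y e].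
Definition ssupp (X : svec) : {set E} := [set e | X e != Zero].
Definition ssep (X Y : svec) : {set E} :=
  [set e | ((X e == Plus) && (Y e == Minus)) || ((X e == Minus) && (Y e == Plus))].
Definition ssum (X Y : svec) : svec :=
  [ffun e => if e \in ssep X Y then Zero else scomp X Y e].

Definition Ie (e : E) (X Y : svec) : {set svec} :=
  [set V : svec | (ssupp V \subset ssupp X :\ e) &&
                  [forall f, (f \notin ssep X Y) ==> (V f == X f)]].
Definition Iset (X Y : svec) : {set svec} := \bigcup_(e in ssep X Y) Ie e X Y.

Definition asym (W : {set svec}) : {set svec} := [set V in W | sneg V \notin W].

Definition Pset (W : {set svec}) : {set svec} :=
  [set ssum X (sneg Y) | X in asym W, Y in asym W &
     [&& ssupp X == ssupp Y,
         Iset X (sneg Y) :&: W == set0 &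
         Iset (sneg X) Y :&: W == set0]].

Definition axA1 (W : {set svec}) : Prop :=
  forall X Y, X \in W -> Y \in W -> scomp X Y \in W /\ scomp X (sneg Y) \in W.
Definition axA2 (W : {set svec}) : Prop :=
  forall X Y, X \in W -> Y \in W -> ssupp X = ssupp Y ->
    forall e, e \in ssep X Y -> Ie e X Y :&: W != set0.
Definition axA3 (W : {set svec}) : Prop :=
  forall P X, P \in Pset W -> X \in W -> scomp P X \in W.

Definition oriented_matroid (O : {set svec}) : Prop :=
  [/\ [ffun _ => Zero] \in O,
      (forall X, X \in O -> sneg X \in O),
      (forall X Y, X \in O -> Y \in O -> scomp X Y \in O) &
      (forall X Y, X \in O -> Y \in O -> ssupp X = ssupp Y ->
        forall e, e \in ssep X Y ->
        exists2 Z, Z \in O & Z e = Zero /\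
          forall f, f \notin ssep X Y -> Z f = scomp X Y f /\ Z f = scomp Y X f)].
End SignVectors.

Arguments sneg {E}.
Arguments scomp {E}.

(* Restriction of a sign vector on E ∪ {g} (= option E, g = None) to E. *)
Definition srestr (E : finType) (X : svec (option E)) : svec E :=
  [ffun e => X (Some e)].

(* W is an affine oriented matroid: there is an oriented matroid O on
   E ∪ {g} (g a new element, here None : option E) with
   W = { X|_E : X in O, X_g = + }. *)
Definition affine_oriented_matroid (E : finType) (W : {set svec E}) : Prop :=
  exists O : {set svec (option E)},
    oriented_matroid O /\ W = [set srestr X | X in O & X None == Plus].

(* The oriented matroid is the lift O of W to E + {g}: (X,+) is in O iff X is in W,
   (X,-) iff -X is in W, and (X,0) iff X is "at infinity", i.e. X o U and (-X) o U lie
   in W for every U in W.  Negation and composition in O follow from (A1), so the work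
   is the elimination axiom (O4).  Eliminating (X,+) against (-Y,-) goes by induction
   on the set where X and Y agree: a vector of W in I(X,-Y) or in I(-X,Y) shrinks that
   set, and if there is none, (A3) puts X + (-Y) at infinity.  Eliminating between two
   vectors Y1, Y2 at infinity reduces to that case after composing them with a vector
   U of W having as few nonzero entries outside supp Y1 as possible: by (A2) these
   entries are then shared by all vectors of W supported in supp Y1 + supp U. *)

From mathcomp Require Import all_boot.
Set Implicit Arguments. Unset Strict Implicit. Unset Printing Implicit Defensive.

Section SignVectors.
Variable E : finType.
Implicit Types (X Y Z U V : svec E) (h : E).

Lemma in_ssupp X h : (h \in ssupp X) = (X h != Zero).
Proof. by rewrite inE. Qed.
Lemma in_ssep X Y h : (h \in ssep X Y) =
  ((X h == Plus) && (Y h == Minus)) || ((X h == Minus) && (Y h == Plus)).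
Proof. by rewrite inE. Qed.
Lemma scompE X Y h : scomp X Y h = if X h != Zero then X h else Y h.
Proof. by rewrite ffunE. Qed.
Lemma snegE X h : sneg X h = oppS (X h).
Proof. by rewrite ffunE. Qed.
Lemma ssumE X Y h : ssum X Y h = if h \in ssep X Y then Zero else scomp X Y h.
Proof. by rewrite ffunE. Qed.

Lemma oppSK : involutive oppS. Proof. by case. Qed.
Lemma snegK : involutive (@sneg E).
Proof. by move=> X; apply/ffunP=> h; rewrite !snegE oppSK. Qed.
Lemma scompA X Y Z : scomp (scomp X Y) Z = scomp X (scomp Y Z).
Proof. by apply/ffunP=> h; rewrite !scompE; case: (X h); case: (Y h). Qed.
Lemma sneg_scomp X Y : sneg (scomp X Y) = scomp (sneg X) (sneg Y).
Proof. by apply/ffunP=> h; rewrite !snegE !scompE !snegE; case: (X h). Qed.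

Lemma ssupp_eq0 X Y : ssupp X = ssupp Y -> forall h, (X h == Zero) = (Y h == Zero).
Proof. by move/setP=> eXY h; move: (eXY h); rewrite !in_ssupp => /negb_inj. Qed.
Lemma eq_ssupp X Y : (forall h, (X h == Zero) = (Y h == Zero)) -> ssupp X = ssupp Y.
Proof. by move=> eXY; apply/setP=> h; rewrite !in_ssupp eXY. Qed.
Lemma ssupp_sneg X : ssupp (sneg X) = ssupp X.
Proof. by apply: eq_ssupp => h; rewrite snegE; case: (X h). Qed.
Lemma ssupp_scompC X Y : ssupp (scomp X Y) = ssupp (scomp Y X).
Proof. by apply: eq_ssupp => h; rewrite !scompE; case: (X h); case: (Y h). Qed.

Lemma ssepC X Y : ssep X Y = ssep Y X.
Proof. by apply/setP=> h; rewrite !in_ssep; case: (X h); case: (Y h). Qed.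
Lemma ssep_snegl X Y : ssep (sneg X) Y = ssep X (sneg Y).
Proof. by apply/setP=> h; rewrite !in_ssep !snegE; case: (X h); case: (Y h). Qed.
Lemma ssep_sneg2 X Y : ssep (sneg X) (sneg Y) = ssep X Y.
Proof. by rewrite ssep_snegl snegK. Qed.
Lemma in_ssep_sneg X Y h : (h \in ssep X (sneg Y)) = (X h == Y h) && (X h != Zero).
Proof. by rewrite in_ssep snegE; case: (X h); case: (Y h). Qed.
Lemma ssep_sneg_sym X Y : ssupp X = ssupp Y -> ssep X (sneg Y) = ssep Y (sneg X).
Proof.
move/ssupp_eq0=> eXY; apply/setP=> h; move: (eXY h).
by rewrite !in_ssep_sneg; case: (X h); case: (Y h).
Qed.

Lemma notin_ssepE X Y h : ssupp X = ssupp Y -> h \notin ssep X Y -> X h = Y h.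
Proof. by move/ssupp_eq0/(_ h); rewrite in_ssep; case: (X h); case: (Y h). Qed.
Lemma notin_ssep_snegE X Y h :
  ssupp X = ssupp Y -> h \notin ssep X (sneg Y) -> X h = oppS (Y h).
Proof. by move=> eXY /notin_ssepE; rewrite ssupp_sneg snegE; apply. Qed.

Lemma sneg_ssum X Y : ssupp X = ssupp Y -> sneg (ssum X (sneg Y)) = ssum Y (sneg X).
Proof.
move/ssupp_eq0=> eXY; apply/ffunP=> h; move: (eXY h).
by rewrite snegE !ssumE !in_ssep !scompE !snegE; case: (X h); case: (Y h).
Qed.

Lemma ssum_sneg_notin_ssep X Y h : ssupp X = ssupp Y ->
  h \notin ssep X (sneg Y) -> ssum X (sneg Y) h = X h.
Proof.
move=> eXY hS; rewrite ssumE (negbTE hS) scompE snegE.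
by move: (ssupp_eq0 eXY h); case: (X h); case: (Y h).
Qed.

Lemma IeP f X Y V : reflect (V f = Zero /\ forall h, h \notin ssep X Y -> V h = X h)
  (V \in Ie f X Y).
Proof.
rewrite inE; apply: (iffP andP) => [[/subsetP sVX /forallP eVX]|[Vf0 eVX]]; split.
- by apply/eqP; apply: contraT => Vf; move: (sVX f); rewrite !inE eqxx Vf => /(_ isT).
- by move=> h hS; move: (eVX h); rewrite hS => /eqP.
- apply/subsetP=> h; rewrite !inE => Vh; apply/andP; split.
    by apply: contraNneq Vh => ->; rewrite Vf0.
  have [|hS] := boolP (h \in ssep X Y); first by rewrite in_ssep; case: (X h).
  by rewrite -eVX.
- by apply/forallP=> h; apply/implyP=> hS; rewrite eVX.
Qed.

Lemma IeC f X Y : ssupp X = ssupp Y -> Ie f X Y = Ie f Y X.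
Proof.
move=> eXY; apply/setP=> V; apply/IeP/IeP => -[Vf eV]; split=> // h.
  by rewrite ssepC => hS; rewrite eV // (notin_ssepE eXY).
move=> hS; have hS' : h \notin ssep Y X by rewrite ssepC.
by rewrite eV // (notin_ssepE eXY).
Qed.
Lemma IsetC X Y : ssupp X = ssupp Y -> Iset X Y = Iset Y X.
Proof. by move=> eXY; rewrite /Iset ssepC; apply: eq_bigr => f _; apply: IeC. Qed.

End SignVectors.

Section AtInfinity.
Variables (E : finType) (W : {set svec E}).
Implicit Types X Y U : svec E.

Definition at_infinity : {set svec E} :=
  [set Y | [forall U in W, (scomp Y U \in W) && (scomp (sneg Y) U \in W)]].

Lemma at_infinityP Y : reflect
  (forall U, U \in W -> scomp Y U \in W /\ scomp (sneg Y) U \in W) (Y \in at_infinity).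
Proof.
rewrite inE; apply: (iffP forallP) => [YU U WU|YU U].
  by move: (YU U); rewrite WU => /andP.
by apply/implyP=> /YU /andP.
Qed.

Lemma sneg_at_infinity Y : Y \in at_infinity -> sneg Y \in at_infinity.
Proof. by move/at_infinityP=> YU; apply/at_infinityP=> U /YU []; rewrite snegK. Qed.

Lemma scomp_at_infinity Y1 Y2 :
  Y1 \in at_infinity -> Y2 \in at_infinity -> scomp Y1 Y2 \in at_infinity.
Proof.
move=> /at_infinityP Y1U /at_infinityP Y2U; apply/at_infinityP=> U /Y2U[WY2 WY2'].
by rewrite sneg_scomp !scompA; split; [case: (Y1U _ WY2) | case: (Y1U _ WY2')].
Qed.

Lemma zero_at_infinity : [ffun _ => Zero] \in at_infinity.
Proof.
have zeroU U : scomp [ffun _ => Zero] U = U by apply/ffunP=> h; rewrite scompE ffunE.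
apply/at_infinityP=> U WU; have -> : sneg [ffun _ => Zero] = [ffun _ => Zero] :> svec E.
  by apply/ffunP=> h; rewrite snegE !ffunE.
by rewrite zeroU.
Qed.

Lemma scomp_at_infinity_W Y X : Y \in at_infinity -> X \in W -> scomp Y X \in W.
Proof. by move/at_infinityP=> YU /YU []. Qed.

Hypothesis A1 : axA1 W.

Lemma scomp_W_at_infinity X Y : X \in W -> Y \in at_infinity -> scomp X Y \in W.
Proof.
move=> WX TY; have -> : scomp X Y = scomp X (scomp Y X).
  by apply/ffunP=> h; rewrite !scompE; case: (X h); case: (Y h).
by case: (A1 WX (scomp_at_infinity_W TY WX)).
Qed.

Lemma W_sneg_at_infinity X : X \in W -> sneg X \in W -> X \in at_infinity.
Proof.
move=> WX WX'; apply/at_infinityP=> U WU.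
by split; [case: (A1 WX WU) | case: (A1 WX' WU)].
Qed.

Hypothesis A3 : axA3 W.

Lemma Pset_at_infinity X Y : X \in W -> Y \in W -> ssupp X = ssupp Y ->
  sneg X \notin W -> sneg Y \notin W ->
  Iset X (sneg Y) :&: W == set0 -> Iset (sneg X) Y :&: W == set0 ->
  ssum X (sneg Y) \in at_infinity.
Proof.
have PW A B : A \in W -> B \in W -> ssupp A = ssupp B -> sneg A \notin W ->
    sneg B \notin W -> Iset A (sneg B) :&: W == set0 ->
    Iset (sneg A) B :&: W == set0 -> ssum A (sneg B) \in Pset W.
  move=> WA WB eAB nA nB IAB IBA; apply/imset2P; exists A B; rewrite ?inE ?WA ?nA //.
  by rewrite WB nB eAB eqxx IAB IBA.
move=> WX WY eXY nX nY IXY IYX; have eYX : ssupp (sneg Y) = ssupp X.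
  by rewrite ssupp_sneg.
apply/at_infinityP=> U WU; split; first exact/A3/WU/PW.
rewrite sneg_ssum //; apply/A3/WU/PW => //.
  by rewrite IsetC ?ssupp_sneg.
by rewrite IsetC.
Qed.

End AtInfinity.

Section Lift.
Variables (E : finType) (W : {set svec E}).
Implicit Types (X Y : svec E) (Z : svec (option E)).

Definition ext X (s : sign) : svec (option E) :=
  [ffun o => if o is Some h then X h else s].

Lemma ext_None X s : ext X s None = s. Proof. by rewrite ffunE. Qed.
Lemma ext_Some X s h : ext X s (Some h) = X h. Proof. by rewrite ffunE. Qed.
Lemma srestr_ext X s : srestr (ext X s) = X.
Proof. by apply/ffunP=> h; rewrite !ffunE. Qed.
Lemma srestrK Z : ext (srestr Z) (Z None) = Z.
Proof. by apply/ffunP=> -[h|]; rewrite !ffunE. Qed.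
Lemma srestr_sneg Z : srestr (sneg Z) = sneg (srestr Z).
Proof. by apply/ffunP=> h; rewrite !ffunE. Qed.
Lemma srestr_scomp Z1 Z2 : srestr (scomp Z1 Z2) = scomp (srestr Z1) (srestr Z2).
Proof. by apply/ffunP=> h; rewrite !ffunE. Qed.
Lemma ssep_ext_Some X Y s t h :
  (Some h \in ssep (ext X s) (ext Y t)) = (h \in ssep X Y).
Proof. by rewrite !in_ssep !ext_Some. Qed.

Definition lift : {set svec (option E)} :=
  [set Z : svec (option E) | match Z None with
           | Plus => srestr Z \in W
           | Minus => sneg (srestr Z) \in W
           | Zero => srestr Z \in at_infinity W end].

Lemma in_lift Z : (Z \in lift) = match Z None with
  | Plus => srestr Z \in W
  | Minus => sneg (srestr Z) \in W
  | Zero => srestr Z \in at_infinity W end.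
Proof. by rewrite inE. Qed.

Lemma in_lift_ext X s : (ext X s \in lift) = match s with
  | Plus => X \in W
  | Minus => sneg X \in W
  | Zero => X \in at_infinity W end.
Proof. by rewrite in_lift ext_None srestr_ext. Qed.

Lemma W_lift : W = [set srestr Z | Z in lift & Z None == Plus].
Proof.
apply/setP=> X; apply/idP/imsetP => [WX|[Z]].
  by exists (ext X Plus); rewrite ?srestr_ext // inE in_lift_ext ext_None WX.
by rewrite inE in_lift => /andP[+ /eqP ZP] ->; rewrite ZP.
Qed.

Lemma zero_lift : [ffun _ => Zero] \in lift.
Proof.
rewrite in_lift ffunE; have -> : srestr [ffun _ => Zero] = [ffun _ => Zero] :> svec E.
  by apply/ffunP=> h; rewrite !ffunE.
exact: zero_at_infinity.
Qed.

Lemma sneg_lift Z : Z \in lift -> sneg Z \in lift.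
Proof.
rewrite !in_lift snegE srestr_sneg snegK.
by case: (Z None) => //; apply: sneg_at_infinity.
Qed.

Hypothesis A1 : axA1 W.

Lemma scomp_lift Z1 Z2 : Z1 \in lift -> Z2 \in lift -> scomp Z1 Z2 \in lift.
Proof.
rewrite !in_lift scompE srestr_scomp; have WW := A1.
case: (Z1 None) => /= W1; case: (Z2 None) => /= W2; rewrite ?sneg_scomp.
- by case: (WW _ _ W1 W2).
- by case: (WW _ _ W1 W2); rewrite snegK.
- exact: scomp_W_at_infinity.
- by case: (WW _ _ W1 W2).
- by case: (WW _ _ W1 W2).
- exact/scomp_W_at_infinity/sneg_at_infinity.
- exact: scomp_at_infinity_W.
- exact/scomp_at_infinity_W/W2/sneg_at_infinity.
- exact: scomp_at_infinity.
Qed.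

End Lift.

Section Elimination.
Variables (E : finType) (W : {set svec E}).
Hypotheses (A1 : axA1 W) (A2 : axA2 W) (A3 : axA3 W).
Implicit Types X Y U V : svec E.

Definition reducible X Y := Iset X (sneg Y) :&: W != set0.

Lemma reducibleP X Y : reducible X Y ->
  exists f V, [/\ f \in ssep X (sneg Y), V \in Ie f X (sneg Y) & V \in W].
Proof. by case/set0Pn=> V /setIP[/bigcupP[f Sf IV] WV]; exists f, V. Qed.

Lemma agree_cases X Y : X \in W -> Y \in W -> ssupp X = ssupp Y ->
  [\/ sneg X \in W \/ sneg Y \in W, reducible X Y, reducible Y X |
      ssum X (sneg Y) \in at_infinity W].
Proof.
move=> WX WY eXY.
have [|nX] := boolP (sneg X \in W); first by constructor 1; left.
have [|nY] := boolP (sneg Y \in W); first by constructor 1; right.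
have [|IXY] := boolP (reducible X Y); first by constructor 2.
have [|IYX] := boolP (reducible Y X); first by constructor 3.
move: IXY IYX; rewrite /reducible !negbK => IXY IYX.
constructor 4; apply: Pset_at_infinity => //.
by rewrite IsetC // ssupp_sneg.
Qed.

Lemma reduce_agree X Y f V : X \in W -> ssupp X = ssupp Y -> V \in W ->
    f \in ssep X (sneg Y) -> V \in Ie f X (sneg Y) ->
  [/\ scomp V (sneg X) \in W, ssupp (scomp V (sneg X)) = ssupp Y,
      forall h, h \notin ssep X (sneg Y) -> scomp V (sneg X) h = X h &
      ssep (scomp V (sneg X)) (sneg Y) \proper ssep X (sneg Y)].
Proof.
move=> WX eXY WV Sf /IeP[Vf eV]; set X' := scomp V (sneg X).
have eX' h : h \notin ssep X (sneg Y) -> X' h = X h.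
  by move=> hS; rewrite scompE snegE eV //; case: (X h).
have S'S : ssep X' (sneg Y) \subset ssep X (sneg Y).
  by apply/subsetP=> h; apply: contraTT => hS; rewrite in_ssep_sneg eX' // -in_ssep_sneg.
split=> //.
- by case: (A1 WV WX).
- rewrite -eXY; apply: eq_ssupp => h; rewrite scompE snegE.
  have [|hS] := boolP (h \in ssep X (sneg Y)); last by rewrite eV //; case: (X h).
  by rewrite in_ssep_sneg; case: (X h); case: (V h); case: (Y h).
- apply/properP; split=> //; exists f => //.
  by move: Sf; rewrite !in_ssep_sneg scompE Vf snegE; case: (X f); case: (Y f).
Qed.

(* The separation set of (X,+) and (-Y,-) is {g} + S(X,-Y). *)
Definition agree_elim X Y e := exists2 Z, Z \in lift W &
  Z (Some e) = Zero /\ forall h, h \notin ssep X (sneg Y) -> Z (Some h) = X h.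

Lemma agree_elimC X Y e : ssupp X = ssupp Y -> agree_elim Y X e -> agree_elim X Y e.
Proof.
move=> eXY [Z LZ [Ze eZ]]; exists (sneg Z); first exact: sneg_lift.
split=> [|h hS]; rewrite snegE ?Ze //.
have hS' : h \notin ssep Y (sneg X) by rewrite -(ssep_sneg_sym eXY).
by rewrite eZ // (notin_ssep_snegE eXY hS).
Qed.

Lemma agree_elim_step X Y e f V : X \in W -> ssupp X = ssupp Y ->
    e \in ssep X (sneg Y) -> f \in ssep X (sneg Y) -> V \in Ie f X (sneg Y) -> V \in W ->
    (forall X', X' \in W -> ssupp X' = ssupp Y ->
       #|ssep X' (sneg Y)| < #|ssep X (sneg Y)| -> e \in ssep X' (sneg Y) ->
       agree_elim X' Y e) ->
  agree_elim X Y e.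
Proof.
move=> WX eXY Se Sf IV WV IH; have /IeP[Vf eV] := IV.
have Xe : X e != Zero by move: Se; rewrite in_ssep_sneg => /andP[].
have [Ve|Ve] := eqVneq (V e) Zero.
  exists (ext V Plus); rewrite ?in_lift_ext ?ext_Some //.
  by split=> // h hS; rewrite ext_Some eV.
have [VX|VnX] := eqVneq (V e) (X e).
  have [WX' eX' offX' ltX'] := reduce_agree WX eXY WV Sf IV.
  have [|Z LZ [Ze eZ]] := IH _ WX' eX' (proper_card ltX').
    by move: Se; rewrite !in_ssep_sneg scompE Ve VX.
  exists Z => //; split=> // h hS; rewrite eZ ?offX' //.
  by apply: contra hS; apply/subsetP/proper_sub.
(* Now V e = -X e, so X and V o X are separated at e and only inside S(X,-Y). *)
have WVX : scomp V X \in W by case: (A1 WV WX).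
have eVX h : h \notin ssep X (sneg Y) -> scomp V X h = X h.
  by move=> hS; rewrite scompE eV //; case: (X h).
have eXVX : ssupp X = ssupp (scomp V X).
  apply: eq_ssupp => h; have [hS|/eVX -> //] := boolP (h \in ssep X (sneg Y)).
  by move: hS; rewrite in_ssep_sneg scompE => /andP[_]; case: (X h); case: (V h).
have Se' : e \in ssep X (scomp V X).
  by move: Ve VnX Xe; rewrite in_ssep scompE; case: (X e); case: (V e).
have /set0Pn[U /setIP[/IeP[Ue eU] WU]] := A2 WX WVX eXVX Se'.
exists (ext U Plus); rewrite ?in_lift_ext ?ext_Some //; split=> // h hS.
by rewrite ext_Some eU // in_ssep eVX //; case: (X h).
Qed.

Lemma agree_elim_W X Y e : X \in W -> Y \in W -> ssupp X = ssupp Y ->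
  e \in ssep X (sneg Y) -> agree_elim X Y e.
Proof.
have [n] := ubnP #|ssep X (sneg Y)|.
elim: n X Y => // n IH X Y ltXY WX WY eXY Se.
have [[WX'|WY']|rXY|rYX|TP] := agree_cases WX WY eXY.
- have Se' : e \in ssep (sneg X) Y by rewrite ssep_snegl.
  have /set0Pn[V /setIP[/IeP[Ve eV] WV]] := A2 WX' WY (etrans (ssupp_sneg X) eXY) Se'.
  exists (ext (sneg V) Minus); rewrite ?in_lift_ext ?snegK ?ext_Some ?snegE ?Ve //.
  by split=> // h hS; rewrite ext_Some snegE eV ?ssep_snegl // snegE oppSK.
- have /set0Pn[V /setIP[/IeP[Ve eV] WV]] :=
    A2 WX WY' (etrans eXY (esym (ssupp_sneg Y))) Se.
  exists (ext V Plus); rewrite ?in_lift_ext ?ext_Some //.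
  by split=> // h hS; rewrite ext_Some eV.
- have [f [V [Sf IV WV]]] := reducibleP rXY.
  apply: (agree_elim_step WX eXY Se Sf IV WV) => X' WX' eX' ltX' Se'.
  exact: IH (leq_trans ltX' ltXY) WX' WY eX' Se'.
- have [f [V [Sf IV WV]]] := reducibleP rYX.
  rewrite (ssep_sneg_sym eXY) in ltXY Se; apply: agree_elimC => //.
  apply: (agree_elim_step WY (esym eXY) Se Sf IV WV) => X' WX' eX' ltX' Se'.
  exact: IH (leq_trans ltX' ltXY) WX' WX eX' Se'.
- exists (ext (ssum X (sneg Y)) Zero); rewrite ?in_lift_ext //.
  split=> [|h hS]; first by rewrite ext_Some ssumE Se.
  by rewrite ext_Some ssum_sneg_notin_ssep.
Qed.

Definition frozen (B K : {set E}) U := forall V, V \in W ->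
  (forall h, h \notin B -> V h = Zero) -> forall k, k \in K -> V k = U k /\ U k != Zero.

Lemma frozen_sneg B K U X : frozen B K U -> X \in W -> sneg X \in W ->
  (forall h, h \notin B -> X h = Zero) -> forall k, k \notin K.
Proof.
move=> frU WX WX' XB k; apply/negP=> Kk.
have [XU U0] := frU X WX XB k Kk.
have [|] := frU _ WX' _ k Kk; first by move=> h /XB; rewrite snegE => ->.
by rewrite snegE XU; move: U0; case: (U k).
Qed.

Definition elim_at_infinity (K : {set E}) X Y := exists2 Z, Z \in at_infinity W &
  (forall h, h \notin ssep X (sneg Y) -> Z h = X h) /\ (forall k, k \in K -> Z k = Zero).

Lemma elim_at_infinityC K X Y :
  ssupp X = ssupp Y -> elim_at_infinity K Y X -> elim_at_infinity K X Y.
Proof.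
move=> eXY [Z TZ [eZ KZ]]; exists (sneg Z); first exact: sneg_at_infinity.
split=> [h hS|k Kk]; rewrite snegE; last by rewrite KZ.
have hS' : h \notin ssep Y (sneg X) by rewrite -(ssep_sneg_sym eXY).
by rewrite eZ // (notin_ssep_snegE eXY hS).
Qed.

Lemma frozen_elim B K U X Y : frozen B K U -> X \in W -> Y \in W ->
  ssupp X = ssupp Y -> (forall h, h \notin B -> X h = Zero) -> elim_at_infinity K X Y.
Proof.
move=> frU; have [n] := ubnP #|ssep X (sneg Y)|.
elim: n X Y => // n IH X Y ltXY WX WY eXY XB.
have YB h : h \notin B -> Y h = Zero.
  by move/XB/eqP; rewrite (ssupp_eq0 eXY) => /eqP.
have reduce X1 Y1 : #|ssep X1 (sneg Y1)| < n.+1 -> X1 \in W -> Y1 \in W ->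
    ssupp X1 = ssupp Y1 -> (forall h, h \notin B -> X1 h = Zero) ->
    reducible X1 Y1 -> elim_at_infinity K X1 Y1.
  move=> lt1 WX1 WY1 e1 X1B /reducibleP[f [V [Sf IV WV]]].
  have [WX' eX' offX' ltX'] := reduce_agree WX1 e1 WV Sf IV.
  have X'B h : h \notin B -> scomp V (sneg X1) h = Zero.
    by move=> hB; rewrite offX' ?X1B // in_ssep_sneg X1B ?andbF.
  have [|//|Z TZ [eZ KZ]] := IH _ _ _ WX' WY1 eX'.
    exact: leq_trans (proper_card ltX') lt1.
  exists Z => //; split=> // h hS; rewrite eZ ?offX' //.
  by apply: contra hS; apply/subsetP/proper_sub.
have [[WX'|WY']|rXY|rYX|TP] := agree_cases WX WY eXY.
- exists X; first exact: W_sneg_at_infinity.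
  by split=> // k Kk; have := frozen_sneg frU WX WX' XB k; rewrite Kk.
- exists (sneg Y); first by apply: W_sneg_at_infinity; rewrite ?snegK.
  split=> [h hS|k Kk]; first by rewrite snegE (notin_ssep_snegE eXY hS).
  by have := frozen_sneg frU WY WY' YB k; rewrite Kk.
- exact: reduce.
- by apply: elim_at_infinityC => //; apply: reduce; rewrite -?(ssep_sneg_sym eXY).
- exists (ssum X (sneg Y)) => //; split=> [h hS|k Kk]; first exact: ssum_sneg_notin_ssep.
  have [XU U0] := frU X WX XB k Kk; have [YU _] := frU Y WY YB k Kk.
  by rewrite ssumE in_ssep_sneg XU YU eqxx U0.
Qed.

Lemma elim_opposite V U k : V \in W -> U \in W -> k \in ssep V U ->
  exists2 V', V' \in W & V' k = Zero /\ ssupp V' \subset ssupp V :|: ssupp U.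
Proof.
move=> WV WU Sk.
have WVU : scomp V U \in W by case: (A1 WV WU).
have WUV : scomp U V \in W by case: (A1 WU WV).
have Sk' : k \in ssep (scomp V U) (scomp U V).
  by move: Sk; rewrite !in_ssep !scompE; case: (V k); case: (U k).
have /set0Pn[V' /setIP[IV' WV']] := A2 WVU WUV (ssupp_scompC V U) Sk'.
exists V' => //; split; first by case/IeP: IV'.
move: IV'; rewrite inE => /andP[sV' _]; apply: subset_trans sV' _.
by apply/subsetP=> h; rewrite !inE scompE => /andP[_]; case: (V h).
Qed.

Lemma exists_frozen (A : {set E}) U0 : U0 \in W ->
  exists2 U, U \in W & frozen (A :|: ssupp U) (ssupp U :\: A) U.
Proof.
move=> WU0; have [U WU Umin] := arg_minnP (fun V => #|ssupp V :\: A|) WU0.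
exists U => // V WV VB k; set K := ssupp U :\: A => Kk.
have VK : ssupp V :\: A = K.
  apply/eqP; rewrite eqEcard Umin // andbT; apply/subsetP=> h.
  rewrite !inE => /andP[hA Vh]; rewrite hA; apply: contraNT Vh => /negbNE/eqP Uh.
  by apply/eqP/VB; rewrite !inE negb_or hA Uh eqxx.
have Vk : V k != Zero by move: Kk; rewrite -VK !inE => /andP[].
have Uk : U k != Zero by move: Kk; rewrite !inE => /andP[].
split=> //; apply/eqP; apply: contraT => VUk.
have Sk : k \in ssep V U by move: Vk Uk VUk; rewrite in_ssep; case: (V k); case: (U k).
have [V' WV' [V'k sV']] := elim_opposite WV WU Sk.
have : #|ssupp V' :\: A| <= #|K :\ k|.
  apply/subset_leq_card/subsetP=> h; rewrite !inE => /andP[hA V'h].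
  have hk : h != k by apply: contraNneq V'h => ->; rewrite V'k.
  rewrite hk hA /=; move/subsetP/(_ h): sV'; rewrite !inE V'h => /(_ isT)/orP[Vh|//].
  by move/setP/(_ h): VK; rewrite !inE hA Vh.
by move/(leq_trans (Umin _ WV')); rewrite (cardsD1 k K) Kk add1n ltnn.
Qed.

Lemma at_infinity_pair Y1 Y2 U e : Y1 \in at_infinity W -> Y2 \in at_infinity W ->
    ssupp Y1 = ssupp Y2 -> U \in W -> e \in ssep Y1 Y2 ->
  exists X Y, [/\ X \in W, Y \in W, ssupp X = ssupp Y, X e = Zero &
    forall h, h \notin ssep Y1 Y2 -> X h = scomp Y1 U h /\ Y h = scomp (sneg Y1) U h].
Proof.
move=> T1 T2 e12 WU Se.
have elimU A B : A \in at_infinity W -> B \in at_infinity W -> ssupp A = ssupp B ->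
    e \in ssep A B ->
    exists2 V, V \in W & V e = Zero /\ forall h, h \notin ssep A B -> V h = scomp A U h.
  move=> TA TB eAB SAB.
  have eABU : ssupp (scomp A U) = ssupp (scomp B U).
    apply: eq_ssupp => h; move: (ssupp_eq0 eAB h).
    by rewrite !scompE; case: (A h); case: (B h).
  have SABU : e \in ssep (scomp A U) (scomp B U).
    by move: SAB; rewrite !in_ssep !scompE; case: (A e); case: (B e).
  have /set0Pn[V /setIP[/IeP[Ve eV] WV]] :=
    A2 (scomp_at_infinity_W TA WU) (scomp_at_infinity_W TB WU) eABU SABU.
  exists V => //; split=> // h hS; apply: eV.
  by rewrite in_ssep !scompE (notin_ssepE eAB hS); case: (B h); case: (U h).
have [V WV [Ve eV]] := elimU _ _ T1 T2 e12 Se.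
have Se' : e \in ssep (sneg Y1) (sneg Y2) by rewrite ssep_sneg2.
have [V' WV' [V'e eV']] := elimU _ _ (sneg_at_infinity T1) (sneg_at_infinity T2)
  (etrans (ssupp_sneg Y1) (etrans e12 (esym (ssupp_sneg Y2)))) Se'.
exists (scomp V V'), (scomp V' V); split.
- by case: (A1 WV WV').
- by case: (A1 WV' WV).
- exact: ssupp_scompC.
- by rewrite scompE Ve V'e.
move=> h hS; have hS' : h \notin ssep (sneg Y1) (sneg Y2) by rewrite ssep_sneg2.
by rewrite !scompE eV // eV' // !scompE snegE; case: (Y1 h); case: (U h).
Qed.

Lemma at_infinity_elim Y1 Y2 e : Y1 \in at_infinity W -> Y2 \in at_infinity W ->
    ssupp Y1 = ssupp Y2 -> e \in ssep Y1 Y2 ->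
  exists2 Z, Z \in at_infinity W &
    Z e = Zero /\ forall h, h \notin ssep Y1 Y2 -> Z h = Y1 h.
Proof.
move=> T1 T2 e12 Se; have [W0|[U0 WU0]] := set_0Vmem W.
  exists [ffun h => if h == e then Zero else Y1 h].
    by apply/at_infinityP=> U; rewrite W0 inE.
  split=> [|h hS]; rewrite ffunE ?eqxx //.
  by case: eqP => // he; move: hS; rewrite he Se.
have [U WU frU] := exists_frozen (ssupp Y1) WU0.
have [X [Y [WX WY eXY Xe eXY1]]] := at_infinity_pair T1 T2 e12 WU Se.
have XB h : h \notin ssupp Y1 :|: ssupp U -> X h = Zero.
  rewrite !inE negb_or !negbK => /andP[/eqP Y1h /eqP Uh].
  have hS : h \notin ssep Y1 Y2 by rewrite in_ssep Y1h.
  by have [-> _] := eXY1 h hS; rewrite scompE Y1h Uh.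
have [Z TZ [eZ KZ]] := frozen_elim frU WX WY eXY XB.
have XS h : X h = Zero -> h \notin ssep X (sneg Y).
  by move=> X0; rewrite in_ssep_sneg X0 andbF.
exists Z => //; split=> [|h hS]; first by rewrite eZ ?XS.
have [Xh Yh] := eXY1 h hS.
have [Y1h|Y1h] := eqVneq (Y1 h) Zero; last first.
  have hS' : h \notin ssep X (sneg Y).
    by rewrite in_ssep_sneg Xh Yh !scompE snegE; case: (Y1 h) Y1h.
  by rewrite eZ // Xh scompE Y1h.
have [Uh|Uh] := eqVneq (U h) Zero; last by rewrite KZ ?Y1h // !inE Y1h Uh.
have X0 : X h = Zero by rewrite Xh scompE Y1h Uh.
by rewrite eZ ?XS // X0 Y1h.
Qed.

End Elimination.

Section LiftElimination.
Variables (E : finType) (W : {set svec E}).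
Hypotheses (A1 : axA1 W) (A2 : axA2 W) (A3 : axA3 W).
Implicit Types (X Y V : svec E) (Z : svec (option E)).

Definition elim_in_lift Z1 Z2 o := exists2 Z, Z \in lift W &
  Z o = Zero /\ forall o', o' \notin ssep Z1 Z2 -> Z o' = Z1 o'.

Lemma elim_in_lift_sneg Z1 Z2 o :
  elim_in_lift (sneg Z1) (sneg Z2) o -> elim_in_lift Z1 Z2 o.
Proof.
case=> Z LZ [Zo eZ]; exists (sneg Z); first exact: sneg_lift.
by split=> [|o' So]; rewrite snegE ?Zo // eZ ?ssep_sneg2 // snegE oppSK.
Qed.

Lemma ext_elim_in_lift X Y s t V o : (forall h, h \notin ssep X Y -> V h = X h) ->
  ext V s \in lift W -> ext V s o = Zero -> elim_in_lift (ext X s) (ext Y t) o.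
Proof.
move=> eV LV Vo; exists (ext V s) => //; split=> // -[h|_]; rewrite ?ext_None //.
by rewrite ssep_ext_Some !ext_Some; apply: eV.
Qed.

Lemma ssupp_ext X Y s t : ssupp (ext X s) = ssupp (ext Y t) ->
  ssupp X = ssupp Y /\ (s == Zero) = (t == Zero).
Proof.
move/ssupp_eq0=> eXY; split; last by have := eXY None; rewrite !ext_None.
by apply: eq_ssupp => h; have := eXY (Some h); rewrite !ext_Some.
Qed.

Lemma elim_in_lift_PP X Y o : X \in W -> Y \in W -> ssupp X = ssupp Y ->
  o \in ssep (ext X Plus) (ext Y Plus) -> elim_in_lift (ext X Plus) (ext Y Plus) o.
Proof.
move=> WX WY eXY; case: o => [h|]; last by rewrite in_ssep !ext_None.
rewrite ssep_ext_Some => Sh.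
have /set0Pn[V /setIP[/IeP[Vh eV] WV]] := A2 WX WY eXY Sh.
by apply: (ext_elim_in_lift Plus eV); rewrite ?in_lift_ext ?ext_Some.
Qed.

Lemma elim_in_lift_00 X Y o : X \in at_infinity W -> Y \in at_infinity W ->
    ssupp X = ssupp Y -> o \in ssep (ext X Zero) (ext Y Zero) ->
  elim_in_lift (ext X Zero) (ext Y Zero) o.
Proof.
move=> TX TY eXY; case: o => [h|]; last by rewrite in_ssep !ext_None.
rewrite ssep_ext_Some => Sh.
have [V TV [Vh eV]] := at_infinity_elim A1 A2 A3 TX TY eXY Sh.
by apply: (ext_elim_in_lift Zero eV); rewrite ?in_lift_ext ?ext_Some.
Qed.

Lemma elim_in_lift_PM X Y o : X \in W -> sneg Y \in W -> ssupp X = ssupp Y ->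
  o \in ssep (ext X Plus) (ext Y Minus) -> elim_in_lift (ext X Plus) (ext Y Minus) o.
Proof.
move=> WX WY' eXY; have eXY' : ssupp X = ssupp (sneg Y) by rewrite ssupp_sneg.
have SE h : (Some h \in ssep (ext X Plus) (ext Y Minus)) =
    (h \in ssep X (sneg (sneg Y))) by rewrite ssep_ext_Some snegK.
have SN : None \in ssep (ext X Plus) (ext Y Minus) by rewrite in_ssep !ext_None.
case: o => [h|] So.
  rewrite SE in So; have [Z LZ [Zh eZ]] := agree_elim_W A1 A2 A3 WX WY' eXY' So.
  exists Z => //; split=> // -[h'|]; last by rewrite SN.
  by rewrite SE !ext_Some; apply: eZ.
have frX : frozen W setT set0 X by move=> V _ _ k; rewrite inE.
have XT h : h \notin setT -> X h = Zero by rewrite inE.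
have [Z TZ [eZ _]] := frozen_elim A1 A3 frX WX WY' eXY' XT.
exists (ext Z Zero); rewrite ?in_lift_ext ?ext_None //.
split=> // -[h|]; last by rewrite SN.
by rewrite SE !ext_Some; apply: eZ.
Qed.

Lemma lift_elim Z1 Z2 o : Z1 \in lift W -> Z2 \in lift W -> ssupp Z1 = ssupp Z2 ->
  o \in ssep Z1 Z2 -> elim_in_lift Z1 Z2 o.
Proof.
wlog Z1N : Z1 Z2 / Z1 None != Minus.
  move=> gen L1 L2 e12 So; have [Z1M|Z1N] := eqVneq (Z1 None) Minus; last exact: gen.
  apply: elim_in_lift_sneg; apply: gen;
    by rewrite ?snegE ?Z1M ?sneg_lift ?ssupp_sneg ?ssep_sneg2.
move: Z1N; rewrite -(srestrK Z1) -(srestrK Z2) !ext_None !in_lift_ext.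
move: (srestr Z1) (Z1 None) (srestr Z2) (Z2 None) => X s Y t.
move=> sM WX WY /ssupp_ext[eXY st].
case: s t sM WX WY st => -[] //= _ WX WY _.
- exact: elim_in_lift_PP.
- exact: elim_in_lift_PM.
- exact: elim_in_lift_00.
Qed.

Lemma lift_oriented_matroid : oriented_matroid (lift W).
Proof.
split; [exact: zero_lift | exact: sneg_lift | exact: scomp_lift |].
move=> Z1 Z2 L1 L2 e12 o So; have [Z LZ [Zo eZ]] := lift_elim L1 L2 e12 So.
exists Z => //; split=> // o' So'.
by rewrite !scompE eZ // (notin_ssepE e12 So'); case: (Z2 o').
Qed.

End LiftElimination.

Unset Implicit Arguments.

Theorem lemma3p1 (E : finType) (W : {set svec E}) :
  axA1 W -> axA2 W -> axA3 W -> affine_oriented_matroid W.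
Proof.
move=> A1 A2 A3; exists (lift W); split; last exact: W_lift.
exact: lift_oriented_matroid.
Qed.
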